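(* The reduced tight span $\mathbf{F}(\mathbb{S}^1)=\{f:[0,\pi]\to\mathbb{R}\ 1\text{-Lipschitz}:0\le f\le\pi,\ f(0)+f(\pi)=\pi\}$ with the sup norm is isometric to $\mathbf{E}(\mathbb{S}^1)$.
   Context: $\mathbb{S}^1=\mathbb{R}/2\pi$ with its geodesic metric. For a metric space $X$, $\Delta(X)=\{f:X\to\mathbb{R}\text{ bounded}:f(x)+f(x')\ge d_X(x,x')\}$ and the tight span $\mathbf{E}(X)$ is the set of pointwise-minimal elements of $\Delta(X)$ with the sup-norm metric. *)

From Stdlib Require Import Reals.
From Coquelicot Require Import Coquelicot.
Open Scope R_scope.

(* The circle S^1 = R/2piZ, represented by its canonical representatives in [0, 2pi). *)
Definition S1 : Type := { x : R | 0 <= x < 2 * PI }.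

Definition d_S1 (x y : S1) : R :=
  Rmin (Rabs (proj1_sig x - proj1_sig y)) (2 * PI - Rabs (proj1_sig x - proj1_sig y)).

Definition bounded {T : Type} (f : T -> R) : Prop :=
  exists M : R, forall x, Rabs (f x) <= M.

Definition in_Delta (f : S1 -> R) : Prop :=
  bounded f /\ forall x x' : S1, f x + f x' >= d_S1 x x'.

Definition in_E (f : S1 -> R) : Prop :=
  in_Delta f /\
  forall g : S1 -> R, in_Delta g -> (forall x, g x <= f x) -> g = f.

Definition E_S1 : Type := { f : S1 -> R | in_E f }.

Definition Ipi : Type := { t : R | 0 <= t <= PI }.

Definition Ipi0 : Ipi := exist _ 0 (conj (Rle_refl 0) (Rlt_le _ _ PI_RGT_0)).
Definition Ipipi : Ipi := exist _ PI (conj (Rlt_le _ _ PI_RGT_0) (Rle_refl PI)).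

Definition in_F (f : Ipi -> R) : Prop :=
  (forall s t : Ipi, Rabs (f s - f t) <= Rabs (proj1_sig s - proj1_sig t)) /\
  (forall t : Ipi, 0 <= f t <= PI) /\
  f Ipi0 + f Ipipi = PI.

Definition F_S1 : Type := { f : Ipi -> R | in_F f }.

Definition sup_dist {T : Type} (f g : T -> R) : Rbar :=
  Lub_Rbar (fun v => exists x : T, v = Rabs (f x - g x)).

Definition dE (f g : E_S1) : Rbar := sup_dist (proj1_sig f) (proj1_sig g).
Definition dF (f g : F_S1) : Rbar := sup_dist (proj1_sig f) (proj1_sig g).

(* Every h in E(S^1) is 1-Lipschitz, and since every point of the circle lies on
   a geodesic between two antipodal points, h(x) + h(x + pi) = pi.  Hence h is
   determined by its restriction to [0, pi], which lies in F(S^1).  Conversely,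
   f in F(S^1) extends by f(t + pi) = pi - f(t) to an element of Delta(S^1)
   whose every value is pinned by its antipode, so the extension is minimal.
   On both half-circles |h - h'| takes the same values, so the sup norm is
   preserved. *)

From Pilot Require Import Defs.
From Stdlib Require Import Reals Lra ProofIrrelevance FunctionalExtensionality.
From Stdlib Require Import Classical ClassicalEpsilon.
From Coquelicot Require Import Coquelicot.
Open Scope R_scope.

Lemma sig_eq {A : Type} {P : A -> Prop} (u v : sig P) :
  proj1_sig u = proj1_sig v -> u = v.
Proof. destruct u, v; simpl; apply subset_eq_compat. Qed.

Section TightSpan.

Context {T : Type} {d : T -> T -> R}.
Hypothesis d_refl : forall x, d x x = 0.
Hypothesis d_sym : forall x y, d x y = d y x.
Hypothesis d_tri : forall x y z, d x z <= d x y + d y z.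

Definition is_Delta (f : T -> R) : Prop :=
  Defs.bounded f /\ forall x x' : T, f x + f x' >= d x x'.

(* For [d := d_S1] these unfold to [in_Delta] and [in_E]. *)
Definition is_tight (f : T -> R) : Prop :=
  is_Delta f /\ forall g : T -> R, is_Delta g -> (forall x, g x <= f x) -> g = f.

Lemma tight_of_partner (f : T -> R) :
  is_Delta f -> (forall x, exists y, f x + f y = d x y) -> is_tight f.
Proof.
  intros Hf Hpartner; split; [exact Hf|].
  intros g [_ Hg] Hgf; apply functional_extensionality; intro x.
  destruct (Hpartner x) as [y Hy].
  specialize (Hg x y); pose proof (Hgf x); pose proof (Hgf y); lra.
Qed.

Variable h : T -> R.
Hypothesis h_tight : is_tight h.

Lemma tight_nonneg x : 0 <= h x.
Proof. destruct h_tight as [[_ Hh] _]; specialize (Hh x x); rewrite d_refl in Hh; lra. Qed.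

Lemma tight_almost_attained x eps : 0 < eps -> exists y, h x + h y < d x y + eps.
Proof.
  intro Heps; apply NNPP; intro Hnone.
  assert (Hfar : forall y, h x + h y >= d x y + eps).
  { intro y; apply Rnot_lt_ge; intro Hy; apply Hnone; now exists y. }
  (* Lowering h at x by eps/2 would stay in Delta, contradicting minimality. *)
  set (g z := if excluded_middle_informative (z = x) then h z - eps / 2 else h z).
  destruct h_tight as [[[M HM] Hh] Hmin].
  assert (Hg : is_Delta g).
  { split.
    - exists (M + eps / 2); intro z; unfold g.
      specialize (HM z); destruct excluded_middle_informative;
        [apply Rabs_le; apply Rabs_le_between in HM|]; lra.
    - intros z z'; unfold g.
      destruct excluded_middle_informative as [->|]; destruct excluded_middle_informative as [->|].
      + specialize (Hfar x); lra.
      + specialize (Hfar z'); lra.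
      + specialize (Hfar z); rewrite d_sym in Hfar; lra.
      + apply Hh. }
  assert (Hgx : g x = h x).
  { rewrite (Hmin g Hg); [reflexivity|]. intro z; unfold g; destruct excluded_middle_informative; lra. }
  unfold g in Hgx; destruct excluded_middle_informative; [lra | congruence].
Qed.

Lemma tight_lipschitz x z : h x - h z <= d x z.
Proof.
  apply Rnot_lt_le; intro Hc.
  destruct (tight_almost_attained x (h x - h z - d x z)) as [y Hy]; [lra|].
  destruct h_tight as [[_ Hh] _].
  specialize (Hh z y); specialize (d_tri x z y); lra.
Qed.

Lemma tight_diametral x y :
  (forall z, d x z + d z y <= d x y) -> h x + h y = d x y.
Proof.
  intro Hgeod; destruct h_tight as [[_ Hh] _]; specialize (Hh x y).
  apply Rle_antisym; [|lra]; apply Rnot_lt_le; intro Hc.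
  destruct (tight_almost_attained x (h x + h y - d x y)) as [z Hz]; [lra|].
  specialize (tight_lipschitz y z); rewrite d_sym; specialize (Hgeod z); lra.
Qed.

End TightSpan.

Arguments is_Delta {T} d f.
Arguments is_tight {T} d f.

Ltac S1_dist_arith :=
  unfold d_S1, Rmin in *; cbn in *; repeat destruct Rle_dec; split_Rabs; lra.

Lemma antipode_spec (x : S1) :
  let a := proj1_sig x in 0 <= (if Rlt_dec a PI then a + PI else a - PI) < 2 * PI.
Proof. destruct x as [a Ha]; cbn; destruct Rlt_dec; lra. Qed.

Definition antipode (x : S1) : S1 := exist _ _ (antipode_spec x).

Lemma antipode_val x :
  proj1_sig (antipode x) = let a := proj1_sig x in if Rlt_dec a PI then a + PI else a - PI.
Proof. reflexivity. Qed.

Lemma iota_spec (t : Ipi) : 0 <= proj1_sig t < 2 * PI.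
Proof. destruct t as [t Ht]; cbn; pose proof PI_RGT_0; lra. Qed.

Definition iota (t : Ipi) : S1 := exist _ _ (iota_spec t).

Lemma d_S1_refl x : d_S1 x x = 0.
Proof. destruct x as [a Ha]; pose proof PI_RGT_0; S1_dist_arith. Qed.

Lemma d_S1_sym x y : d_S1 x y = d_S1 y x.
Proof. destruct x as [a Ha], y as [b Hb]; S1_dist_arith. Qed.

Lemma d_S1_tri x y z : d_S1 x z <= d_S1 x y + d_S1 y z.
Proof. destruct x as [a Ha], y as [b Hb], z as [c Hc]; pose proof PI_RGT_0; S1_dist_arith. Qed.

Lemma d_S1_antipode_r x y : d_S1 x (antipode y) = PI - d_S1 x y.
Proof.
  unfold d_S1 at 1; rewrite antipode_val.
  destruct x as [a Ha], y as [b Hb]; cbn; destruct Rlt_dec; S1_dist_arith.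
Qed.

Lemma d_S1_antipode_l x y : d_S1 (antipode x) y = PI - d_S1 x y.
Proof. rewrite d_S1_sym, d_S1_antipode_r, d_S1_sym; reflexivity. Qed.

Lemma d_S1_iota s t : d_S1 (iota s) (iota t) = Rabs (proj1_sig s - proj1_sig t).
Proof. destruct s as [s Hs], t as [t Ht]; cbn; S1_dist_arith. Qed.

Lemma in_E_antipodal h x : in_E h -> h x + h (antipode x) = PI.
Proof.
  intro Hh; replace PI with (d_S1 x (antipode x)).
  - apply (tight_diametral d_S1_sym d_S1_tri h Hh).
    intro z; rewrite !d_S1_antipode_r, d_S1_refl, (d_S1_sym z x); lra.
  - rewrite d_S1_antipode_r, d_S1_refl; ring.
Qed.

Definition clamp (t : R) : Ipi.
Proof.
  exists (Rmax 0 (Rmin t PI)); pose proof PI_RGT_0; split.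
  - apply Rmax_l.
  - unfold Rmax, Rmin; repeat destruct Rle_dec; lra.
Defined.

Lemma clamp_id (t : Ipi) : clamp (proj1_sig t) = t.
Proof. apply sig_eq; destruct t as [t Ht]; cbn; unfold Rmax, Rmin; repeat destruct Rle_dec; lra. Qed.

Lemma S1_cases x : exists t, x = iota t \/ x = antipode (iota t).
Proof.
  destruct x as [a Ha]; pose proof PI_RGT_0.
  destruct (Rle_dec a PI).
  - exists (clamp a); left; apply sig_eq; cbn; unfold Rmax, Rmin; repeat destruct Rle_dec; lra.
  - exists (clamp (a - PI)); right; apply sig_eq; cbn.
    unfold Rmax, Rmin; repeat destruct Rle_dec; destruct Rlt_dec; lra.
Qed.

(* Consistent at the antipodal pair 0, pi because f 0 + f pi = pi. *)
Definition extend (f : Ipi -> R) (x : S1) : R :=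
  let a := proj1_sig x in
  if Rle_dec a PI then f (clamp a) else PI - f (clamp (a - PI)).

Definition restrict (h : S1 -> R) (t : Ipi) : R := h (iota t).

Lemma extend_iota f t : extend f (iota t) = f t.
Proof.
  unfold extend; change (proj1_sig (iota t)) with (proj1_sig t).
  destruct Rle_dec as [_|Hgt]; [apply f_equal, clamp_id|].
  destruct (proj2_sig t); contradiction.
Qed.

Section Extension.

Variable f : Ipi -> R.
Hypothesis f_in_F : in_F f.

Lemma F_endpoint_bounds s :
  Rabs (f s - f Ipi0) <= proj1_sig s /\ Rabs (f s - f Ipipi) <= PI - proj1_sig s.
Proof.
  destruct f_in_F as [Hlip _]; pose proof (proj2_sig s).
  specialize (Hlip s Ipi0) as H0; specialize (Hlip s Ipipi) as Hpi.
  change (proj1_sig Ipi0) with 0 in H0; change (proj1_sig Ipipi) with PI in Hpi.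
  rewrite (Rabs_pos_eq (_ - 0)) in H0 by lra.
  rewrite (Rabs_left1 (_ - PI)) in Hpi by lra; split; lra.
Qed.

Lemma F_sum_ge s t : f s + f t >= Rabs (proj1_sig s - proj1_sig t).
Proof.
  destruct f_in_F as [_ [_ Hend]].
  destruct (F_endpoint_bounds s), (F_endpoint_bounds t); split_Rabs; lra.
Qed.

Lemma F_sum_le s t : f s + f t <= 2 * PI - Rabs (proj1_sig s - proj1_sig t).
Proof.
  destruct f_in_F as [_ [_ Hend]].
  destruct (F_endpoint_bounds s), (F_endpoint_bounds t); split_Rabs; lra.
Qed.

Lemma extend_antipode x : extend f (antipode x) = PI - extend f x.
Proof.
  destruct f_in_F as [_ [_ Hend]].
  assert (H0 : clamp 0 = Ipi0) by exact (clamp_id Ipi0).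
  assert (Hpi : clamp PI = Ipipi) by exact (clamp_id Ipipi).
  unfold extend; rewrite antipode_val; destruct x as [a Ha]; cbv zeta; simpl proj1_sig.
  destruct (Rlt_dec a PI); repeat destruct Rle_dec; try lra.
  - replace a with 0 by lra; rewrite Rplus_0_l, H0, Hpi; lra.
  - now replace (a + PI - PI) with a by ring.
  - replace a with PI by lra; rewrite Rminus_diag, H0, Hpi; lra.
Qed.

Lemma extend_in_Delta : is_Delta d_S1 (extend f).
Proof.
  destruct f_in_F as [Hlip [Hbnd _]]; split.
  - exists PI; intro x; destruct (S1_cases x) as [t [-> | ->]];
      rewrite ?extend_antipode, extend_iota; specialize (Hbnd t); apply Rabs_le; lra.
  - intros x y.
    destruct (S1_cases x) as [s [-> | ->]], (S1_cases y) as [t [-> | ->]];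
      rewrite ?extend_antipode, ?d_S1_antipode_l, ?d_S1_antipode_r, ?extend_iota, d_S1_iota.
    + apply F_sum_ge.
    + specialize (Hlip s t); apply Rabs_le_between in Hlip; lra.
    + specialize (Hlip s t); apply Rabs_le_between in Hlip; lra.
    + specialize (F_sum_le s t); lra.
Qed.

Lemma extend_in_E : in_E (extend f).
Proof.
  apply tight_of_partner; [exact extend_in_Delta|].
  intro x; exists (antipode x); rewrite extend_antipode, d_S1_antipode_r, d_S1_refl; ring.
Qed.

End Extension.

Lemma restrict_in_F h : in_E h -> in_F (restrict h).
Proof.
  intro Hh; unfold restrict; split; [|split].
  - intros s t; rewrite <- d_S1_iota; apply Rabs_le.
    specialize (tight_lipschitz d_S1_sym d_S1_tri h Hh (iota s) (iota t)).
    specialize (tight_lipschitz d_S1_sym d_S1_tri h Hh (iota t) (iota s)).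
    rewrite d_S1_sym; lra.
  - intro t; specialize (in_E_antipodal h (iota t) Hh).
    specialize (tight_nonneg d_S1_refl h Hh (antipode (iota t))).
    specialize (tight_nonneg d_S1_refl h Hh (iota t)); lra.
  - replace (iota Ipipi) with (antipode (iota Ipi0)); [exact (in_E_antipodal h _ Hh)|].
    apply sig_eq; rewrite antipode_val; cbn; pose proof PI_RGT_0; destruct Rlt_dec; lra.
Qed.

Lemma extend_restrict h : in_E h -> extend (restrict h) = h.
Proof.
  intro Hh; apply functional_extensionality; intro x.
  destruct (S1_cases x) as [t [-> | ->]].
  - apply extend_iota.
  - rewrite extend_antipode by exact (restrict_in_F h Hh).
    rewrite extend_iota; unfold restrict; specialize (in_E_antipodal h (iota t) Hh); lra.
Qed.

Lemma sup_dist_extend f g :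
  in_F f -> in_F g -> sup_dist (extend f) (extend g) = sup_dist f g.
Proof.
  intros Hf Hg; apply Lub_Rbar_eqset; intro v; split.
  - intros [x ->]; destruct (S1_cases x) as [t [-> | ->]]; exists t.
    + now rewrite !extend_iota.
    + rewrite extend_antipode, (extend_antipode g), !extend_iota by assumption.
      rewrite <- Rabs_Ropp; f_equal; ring.
  - intros [t ->]; exists (iota t); now rewrite !extend_iota.
Qed.

Definition F_to_E (f : F_S1) : E_S1 :=
  exist _ (extend (proj1_sig f)) (extend_in_E _ (proj2_sig f)).

Theorem proposition3p5 :
  exists Phi : F_S1 -> E_S1,
    (forall f g : F_S1, dE (Phi f) (Phi g) = dF f g) /\
    (forall f g : F_S1, Phi f = Phi g -> f = g) /\
    (forall h : E_S1, exists f : F_S1, Phi f = h).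
Proof.
  exists F_to_E; split; [|split].
  - intros [f Hf] [g Hg]; exact (sup_dist_extend f g Hf Hg).
  - intros [f Hf] [g Hg] Heq; apply sig_eq; cbn.
    apply functional_extensionality; intro t.
    rewrite <- (extend_iota f t), <- (extend_iota g t).
    now apply (f_equal (@proj1_sig _ _)) in Heq; cbn in Heq; rewrite Heq.
  - intros [h Hh]; exists (exist _ (restrict h) (restrict_in_F h Hh)).
    apply sig_eq; exact (extend_restrict h Hh).
Qed.
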